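(* Under the setting of the context, if (TS1) holds and $u$ is the solution of problem (P), then $$\mu_x\sum_{m=0}^\infty u(m\mu_x,t)=A\mu_x\quad\text{for all }t\in\mathbb{T}$$ (and $u(m\mu_x,t)=0$ for $m<0$, so this is the sum over all $m\in\mathbb{Z}$).
   Context: A time scale $\mathbb{T}$ is a nonempty closed subset of $\mathbb{R}$; here $\min\mathbb{T}=0$ and $\sup\mathbb{T}=+\infty$. $\sigma(t)=\inf\{s\in\mathbb{T}:s>t\}$ is the forward jump and $\mu_t(t)=\sigma(t)-t$ the graininess; $u^{\Delta_t}$ denotes the (Hilger) delta derivative in $t$. Fix $A>0$, $k>0$, $\mu_x>0$, $\Omega=\mu_x\mathbb{Z}\times\mathbb{T}$. Problem (P): $u^{\Delta_t}(x,t)+k\frac{u(x,t)-u(x-\mu_x,t)}{\mu_x}=0$ for $(x,t)\in\Omega$, $u(0,0)=A$, $u(x,0)=0$ for $x\ne0$. A solution is $u:\Omega\to\mathbb{R}$ with each $u(x,\cdot)$ delta differentiable on $\mathbb{T}$, satisfying (P), and bounded on $\mu_x\mathbb{Z}\times(\mathbb{T}\cap[0,T_0])$ for every $T_0>0$. Condition (TS1): $1-\frac{k\mu_t(t)}{\mu_x}>0$ for all $t\in\mathbb{T}$. *)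

From Stdlib Require Import Reals ZArith Classical ClassicalEpsilon.
Open Scope R_scope.

Record time_scale (T : R -> Prop) : Prop := {
  ts_closed : forall x, (forall eps, 0 < eps -> exists y, T y /\ Rabs (x - y) < eps) -> T x;
  ts_zero : T 0;
  ts_min : forall t, T t -> 0 <= t;
  ts_unbounded : forall M, exists t, T t /\ M < t
}.

Definition is_glb (E : R -> Prop) (m : R) : Prop :=
  (forall x, E x -> m <= x) /\ (forall b, (forall x, E x -> b <= x) -> b <= m).

(* forward jump sigma(t) = inf { s in T : s > t } (chosen classically;
   the infimum exists whenever T is unbounded above). *)
Definition sigma (T : R -> Prop) (t : R) : R :=
  epsilon (inhabits 0) (fun m => is_glb (fun s => T s /\ t < s) m).

Definition graininess (T : R -> Prop) (t : R) : R := sigma T t - t.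

Definition delta_deriv (T : R -> Prop) (f : R -> R) (t d : R) : Prop :=
  forall eps, 0 < eps -> exists delta, 0 < delta /\
    forall s, T s -> Rabs (t - s) < delta ->
      Rabs (f (sigma T t) - f s - d * (sigma T t - s)) <= eps * Rabs (sigma T t - s).

(* u m t stands for u(m * mu_x, t), m in Z. Solution of problem (P). *)
Definition is_solution_P (T : R -> Prop) (A k mux : R) (u : Z -> R -> R) : Prop :=
  (forall m t, T t -> exists d, delta_deriv T (u m) t d /\
      d + k * ((u m t - u (m - 1)%Z t) / mux) = 0) /\
  u 0%Z 0 = A /\
  (forall m, m <> 0%Z -> u m 0 = 0) /\
  (forall T0, 0 < T0 -> exists B, forall m t, T t -> t <= T0 -> Rabs (u m t) <= B).

(* Put c = k / mu_x > 0.  A solution of (P) satisfies the linear system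
   u_m^Delta = -c (u_m - u_(m-1)), and (TS1) reads 1 - c mu(t) > 0.  The
   argument rests on one comparison principle: if g^Delta >= -c g on
   T cap [0,T0], where 1 - c mu >= 0, and g(0) >= 0, then g >= 0 there.  It
   is proved with the induction principle for time scales (right-scattered,
   right-dense and left-dense steps), after setting up the calculus of the
   delta derivative (jump formula, continuity, linearity, powers).

   For the scheme, repeated comparison then gives:
   - u_m = 0 for m < 0, since |u_m(s)| <= B (c s)^n / n! for every n;
   - u_m >= 0 for m >= 0;
   - the partial sums P_N = u_0 + ... + u_N satisfy P_N^Delta = -c u_N, so
     P_N <= A, and D_M = sum_(N <= M) (A - P_N) satisfies D_M^Delta = c P_M,
     so (M + 1) (A - P_M(t)) <= D_M(t) <= c A t.
   Hence P_M(t) -> A, i.e. mu_x sum_m u(m mu_x, t) = A mu_x. *)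

From Pilot Require Import Defs.
From Stdlib Require Import Reals ZArith Lra Lia Classical ClassicalEpsilon.
Open Scope R_scope.

Lemma Rabs_le_between a b : Rabs a <= b -> - b <= a <= b.
Proof. unfold Rabs; destruct (Rcase_abs a); intros; lra. Qed.

Lemma le_0_of_le_eps_mult a b : 0 <= b -> (forall e, 0 < e -> a <= e * b) -> a <= 0.
Proof.
  intros Hb H. apply Rnot_lt_le. intro Ha.
  assert (He : 0 < a / (2 * (b + 1))) by (apply Rdiv_lt_0_compat; lra).
  specialize (H _ He).
  assert (Hlt : a / (2 * (b + 1)) * b < a / (2 * (b + 1)) * (2 * (b + 1)))
    by (apply Rmult_lt_compat_l; lra).
  replace (a / (2 * (b + 1)) * (2 * (b + 1))) with a in Hlt by (field; lra).
  lra.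
Qed.

Lemma lub_approx (C : R -> Prop) tau : is_lub C tau ->
  forall e, 0 < e -> exists c, C c /\ tau - e < c /\ c <= tau.
Proof.
  intros [Hub Hleast] e He. apply NNPP. intro Hno.
  assert (tau <= tau - e); [|lra].
  apply Hleast. intros x Cx. apply Rnot_lt_le. intro Hx.
  apply Hno. exists x. auto.
Qed.

Lemma eq_0_of_le_pow_fact y B x :
  (forall n, Rabs y <= B * (x ^ n / INR (fact n))) -> y = 0.
Proof.
  intros Hle.
  assert (Hconst : forall a, Un_cv (fun _ => a) a).
  { intros a eps Heps. exists 0%nat. intros. rewrite Rdist_eq. lra. }
  assert (Hlim : Rabs y <= B * 0).
  { apply (Rle_cv_lim Hle (Hconst _)).
    apply CV_mult; [apply Hconst | apply cv_speed_pow_fact]. }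
  rewrite Rmult_0_r in Hlim.
  destruct (Req_dec y 0) as [|Hy]; [assumption|].
  pose proof (Rabs_pos_lt y Hy). lra.
Qed.

Lemma infinite_sum_of_tail_bound (f : nat -> R) L K :
  (forall n, 0 <= L - sum_f_R0 f n <= K / INR (S n)) -> infinite_sum f L.
Proof.
  intros Htail eps Heps.
  destruct (INR_archimed eps K Heps) as [N HN].
  exists N. intros n Hn. unfold Rdist.
  destruct (Htail n) as [H0 H1].
  rewrite Rabs_left1 by lra.
  assert (Hpos : 0 < INR (S n)) by (apply lt_0_INR; lia).
  assert (HNn : INR N <= INR (S n)) by (apply le_INR; lia).
  assert (Hfrac : K / INR (S n) < eps).
  { apply (Rmult_lt_reg_r (INR (S n))); [assumption|].
    replace (K / INR (S n) * INR (S n)) with K by (field; lra). nra. }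
  lra.
Qed.

Section TimeScale.
Variable T : R -> Prop.
Hypothesis HT : time_scale T.

(* The forward jump is the infimum of the points of T after t; it exists
   because T is unbounded above. *)
Lemma sigma_glb t : T t -> is_glb (fun s => T s /\ t < s) (Defs.sigma T t).
Proof.
  intros Ht. unfold Defs.sigma. apply epsilon_spec.
  destruct (completeness (fun x => T (- x) /\ t < - x)) as [m [Hub Hl]].
  - exists (- t). intros x [_ Hx]. lra.
  - destruct (ts_unbounded T HT t) as [s [Ts ts]]. exists (- s).
    rewrite Ropp_involutive. auto.
  - exists (- m). split.
    + intros x [Tx tx].
      assert (- x <= m) by (apply Hub; rewrite Ropp_involutive; auto). lra.
    + intros b Hb.
      assert (m <= - b); [|lra].
      apply Hl. intros x [Tx tx]. assert (b <= - x) by (apply Hb; auto). lra.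
Qed.

Lemma sigma_ge t : T t -> t <= Defs.sigma T t.
Proof. intros Ht. apply (proj2 (sigma_glb t Ht)). intros x [_ Hx]. lra. Qed.

Lemma sigma_le_next t s : T t -> T s -> t < s -> Defs.sigma T t <= s.
Proof. intros Ht Ts ts. apply (proj1 (sigma_glb t Ht)). auto. Qed.

Lemma sigma_approx t d : T t -> 0 < d ->
  exists y, T y /\ t < y /\ y < Defs.sigma T t + d.
Proof.
  intros Ht Hd. apply NNPP. intro Hno.
  assert (Defs.sigma T t + d <= Defs.sigma T t); [|lra].
  apply (proj2 (sigma_glb t Ht)). intros x [Tx tx].
  apply Rnot_lt_le. intro Hc. apply Hno. exists x. auto.
Qed.

(* T is closed, so it contains sigma(t). *)
Lemma sigma_in_T t : T t -> T (Defs.sigma T t).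
Proof.
  intros Ht. apply (ts_closed T HT). intros e He.
  destruct (sigma_approx t e Ht He) as [y [Ty [ty ys]]].
  pose proof (sigma_le_next t y Ht Ty ty).
  exists y. split; auto. rewrite Rabs_left1; lra.
Qed.

(* T is closed, so it contains the least upper bound of any of its subsets. *)
Lemma lub_in_T (C : R -> Prop) tau :
  (forall x, C x -> T x) -> is_lub C tau -> T tau.
Proof.
  intros HCT Hlub. apply (ts_closed T HT). intros e He.
  destruct (lub_approx C tau Hlub e He) as [c [Cc [c1 c2]]].
  exists c. split; auto. rewrite Rabs_right; lra.
Qed.

Lemma delta_deriv_ext f g t d :
  (forall x, f x = g x) -> delta_deriv T f t d -> delta_deriv T g t d.
Proof.
  intros E H e He. destruct (H e He) as [x [Hx K]]. exists x. split; auto.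
  intros s Ts Hs. rewrite <- !E. auto.
Qed.

Lemma delta_deriv_lincomb f g t d1 d2 a b :
  delta_deriv T f t d1 -> delta_deriv T g t d2 ->
  delta_deriv T (fun x => a * f x + b * g x) t (a * d1 + b * d2).
Proof.
  intros H1 H2 e He.
  pose proof (Rabs_pos a); pose proof (Rabs_pos b).
  set (e' := e / (Rabs a + Rabs b + 1)).
  assert (He' : 0 < e') by (apply Rdiv_lt_0_compat; lra).
  assert (Ee : e' * (Rabs a + Rabs b + 1) = e) by (unfold e'; field; lra).
  destruct (H1 e' He') as [x1 [Hx1 K1]]. destruct (H2 e' He') as [x2 [Hx2 K2]].
  exists (Rmin x1 x2). split; [apply Rmin_pos; auto|].
  intros s Ts Hs.
  specialize (K1 s Ts (Rlt_le_trans _ _ _ Hs (Rmin_l x1 x2))).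
  specialize (K2 s Ts (Rlt_le_trans _ _ _ Hs (Rmin_r x1 x2))).
  set (X := f (Defs.sigma T t) - f s - d1 * (Defs.sigma T t - s)) in *.
  set (Y := g (Defs.sigma T t) - g s - d2 * (Defs.sigma T t - s)) in *.
  set (Z := Rabs (Defs.sigma T t - s)) in *.
  assert (HZ : 0 <= Z) by apply Rabs_pos.
  replace (a * f (Defs.sigma T t) + b * g (Defs.sigma T t) - (a * f s + b * g s)
           - (a * d1 + b * d2) * (Defs.sigma T t - s)) with (a * X + b * Y)
    by (unfold X, Y; ring).
  eapply Rle_trans; [apply Rabs_triang|]. rewrite !Rabs_mult.
  assert (Rabs a * Rabs X <= Rabs a * (e' * Z)) by (apply Rmult_le_compat_l; auto).
  assert (Rabs b * Rabs Y <= Rabs b * (e' * Z)) by (apply Rmult_le_compat_l; auto).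
  assert (0 <= e' * Z) by (apply Rmult_le_pos; lra).
  rewrite <- Ee. nra.
Qed.

Lemma delta_deriv_const c t : delta_deriv T (fun _ => c) t 0.
Proof.
  intros e He. exists 1. split; [lra|]. intros s _ _.
  replace (c - c - 0 * (Defs.sigma T t - s)) with 0 by ring.
  rewrite Rabs_R0. apply Rmult_le_pos; [lra | apply Rabs_pos].
Qed.

Lemma delta_deriv_id t : delta_deriv T (fun x => x) t 1.
Proof.
  intros e He. exists 1. split; [lra|]. intros s _ _.
  replace (Defs.sigma T t - s - 1 * (Defs.sigma T t - s)) with 0 by ring.
  rewrite Rabs_R0. apply Rmult_le_pos; [lra | apply Rabs_pos].
Qed.

(* Taking s = t in the definition: f(sigma t) = f(t) + mu(t) f^Delta(t). *)
Lemma delta_deriv_jump f t d : T t -> delta_deriv T f t d ->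
  f (Defs.sigma T t) = f t + (Defs.sigma T t - t) * d.
Proof.
  intros Ht Hd.
  set (r := f (Defs.sigma T t) - f t - d * (Defs.sigma T t - t)).
  assert (Hr : Rabs r <= 0).
  { apply (le_0_of_le_eps_mult _ (Rabs (Defs.sigma T t - t))); [apply Rabs_pos|].
    intros e He. destruct (Hd e He) as [de [Hde H]]. apply H; auto.
    rewrite Rminus_diag, Rabs_R0. lra. }
  assert (r = 0); [|unfold r in *; lra].
  destruct (Req_dec r 0) as [|Hne]; [assumption|].
  pose proof (Rabs_pos_lt r Hne). lra.
Qed.

Lemma delta_deriv_continuous f t d : T t -> delta_deriv T f t d ->
  forall eps, 0 < eps -> exists delta, 0 < delta /\
    forall s, T s -> Rabs (t - s) < delta -> Rabs (f t - f s) <= eps.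
Proof.
  intros Ht Hd eps Heps.
  set (mu := Defs.sigma T t - t).
  assert (Hmu : 0 <= mu) by (pose proof (sigma_ge t Ht); unfold mu; lra).
  pose proof (Rabs_pos d).
  destruct (Hd (eps / (2 * (mu + 1)))) as [dl [Hdl K]].
  { apply Rdiv_lt_0_compat; lra. }
  set (dl' := Rmin dl (Rmin 1 (eps / (2 * (Rabs d + 1))))).
  assert (D1 : dl' <= dl) by apply Rmin_l.
  assert (D2 : dl' <= 1) by (eapply Rle_trans; [apply Rmin_r | apply Rmin_l]).
  assert (D3 : dl' <= eps / (2 * (Rabs d + 1)))
    by (eapply Rle_trans; [apply Rmin_r | apply Rmin_r]).
  exists dl'. split.
  { apply Rmin_pos; auto. apply Rmin_pos; [lra|]. apply Rdiv_lt_0_compat; lra. }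
  intros s Ts Hs.
  specialize (K s Ts ltac:(lra)).
  rewrite (delta_deriv_jump f t d Ht Hd) in K. fold mu in K.
  replace (f t + mu * d - f s - d * (Defs.sigma T t - s))
    with (f t - f s - d * (t - s)) in K by (unfold mu; ring).
  assert (Hdist : Rabs (Defs.sigma T t - s) <= mu + 1).
  { replace (Defs.sigma T t - s) with (mu + (t - s)) by (unfold mu; ring).
    eapply Rle_trans; [apply Rabs_triang|]. rewrite (Rabs_right mu) by lra. lra. }
  assert (Hlin : Rabs d * Rabs (t - s) <= eps / 2).
  { apply Rle_trans with (Rabs d * (eps / (2 * (Rabs d + 1)))).
    - apply Rmult_le_compat_l; lra.
    - replace (Rabs d * (eps / (2 * (Rabs d + 1))))
        with (eps / 2 - eps / (2 * (Rabs d + 1))) by (field; lra).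
      assert (0 < eps / (2 * (Rabs d + 1))) by (apply Rdiv_lt_0_compat; lra). lra. }
  assert (Hquot : eps / (2 * (mu + 1)) * Rabs (Defs.sigma T t - s) <= eps / 2).
  { apply Rle_trans with (eps / (2 * (mu + 1)) * (mu + 1)).
    - apply Rmult_le_compat_l; [|lra]. left. apply Rdiv_lt_0_compat; lra.
    - right. field. lra. }
  replace (f t - f s) with ((f t - f s - d * (t - s)) + d * (t - s)) by ring.
  eapply Rle_trans; [apply Rabs_triang|]. rewrite Rabs_mult. lra.
Qed.

Definition left_dense (t : R) : Prop :=
  forall del, 0 < del -> exists r, T r /\ t - del < r /\ r < t.

Lemma nonneg_at_left_dense f t d : T t -> delta_deriv T f t d -> left_dense t ->
  (forall r, T r -> r < t -> 0 <= f r) -> 0 <= f t.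
Proof.
  intros Ht Hd Hleft Hpos. apply Rnot_lt_le. intro Hneg.
  destruct (delta_deriv_continuous f t d Ht Hd (- f t / 2)) as [dl [Hdl K]]; [lra|].
  destruct (Hleft dl Hdl) as [r [Tr [r1 r2]]].
  specialize (K r Tr ltac:(rewrite Rabs_right; lra)).
  apply Rabs_le_between in K. pose proof (Hpos r Tr r2). lra.
Qed.

Definition holds_upto (P : R -> Prop) (s : R) : Prop := forall r, T r -> r <= s -> P r.

Lemma holds_upto_lub (P : R -> Prop) (C : R -> Prop) tau :
  (forall x, C x -> T x /\ holds_upto P x) -> is_lub C tau ->
  (forall t, T t -> (forall r, T r -> r < t -> P r) -> left_dense t -> P t) ->
  holds_upto P tau.
Proof.
  intros HC Hlub Hleft.
  pose proof (lub_approx C tau Hlub) as Happ.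
  assert (Ttau : T tau) by (apply (lub_in_T C); [intros x Cx; apply HC | ]; auto).
  assert (Hbelow : forall r, T r -> r < tau -> P r).
  { intros r Tr Hr. destruct (Happ (tau - r)) as [c [Cc [c1 _]]]; [lra|].
    apply (proj2 (HC c Cc)); auto. lra. }
  assert (Ptau : P tau).
  { destruct (classic (left_dense tau)) as [Hd|Hd]; [apply Hleft; auto|].
    apply not_all_ex_not in Hd. destruct Hd as [d0 Hd0].
    apply imply_to_and in Hd0. destruct Hd0 as [Hd0 Hno].
    destruct (Happ d0 Hd0) as [c [Cc [c1 c2]]]. destruct (HC c Cc) as [Tc Pc].
    destruct (Rle_lt_or_eq_dec c tau c2) as [Hlt| <-]; [|apply Pc; auto; lra].
    exfalso. apply Hno. exists c. auto. }
  intros r Tr Hr. destruct (Rle_lt_or_eq_dec r tau Hr) as [| ->]; auto.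
Qed.

(* Otherwise it would fail right after the supremum tau
   of the points of T (below a counterexample) up to which it holds. *)
Lemma time_scale_induction (P : R -> Prop) :
  P 0 ->
  (forall t, T t -> holds_upto P t -> t < Defs.sigma T t -> P (Defs.sigma T t)) ->
  (forall t, T t -> holds_upto P t -> Defs.sigma T t = t ->
     exists del, 0 < del /\ forall s, T s -> t < s -> s < t + del -> P s) ->
  (forall t, T t -> (forall r, T r -> r < t -> P r) -> left_dense t -> P t) ->
  forall t, T t -> P t.
Proof.
  intros H0 Hscat Hdense Hleft t1 Tt1. apply NNPP. intro Hfail.
  set (C := fun s => T s /\ s <= t1 /\ holds_upto P s).
  assert (C0 : C 0).
  { split; [apply (ts_zero T HT)|]. split; [apply (ts_min T HT); auto|].
    intros r Tr Hr. replace r with 0; [auto|]. pose proof (ts_min T HT r Tr). lra. }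
  destruct (completeness C) as [tau Hlub].
  { exists t1. intros x [_ [Hx _]]. auto. }
  { exists 0. auto. }
  assert (Hupto : holds_upto P tau)
    by (apply (holds_upto_lub P C); auto; intros x [Tx [_ Hx]]; auto).
  assert (Ttau : T tau) by (apply (lub_in_T C); auto; intros x [Tx _]; auto).
  destruct Hlub as [Hub Hleast].
  assert (Htau : tau < t1).
  { assert (tau <= t1) by (apply Hleast; intros x [_ [Hx _]]; auto).
    destruct (Rle_lt_or_eq_dec tau t1) as [| ->]; auto.
    exfalso. apply Hfail, Hupto; [exact Tt1 | apply Rle_refl]. }
  destruct (Rle_lt_or_eq_dec tau (Defs.sigma T tau) (sigma_ge tau Ttau)) as [Hrs|Hrd].
  - (* right-scattered: sigma(tau) also belongs to C *)
    assert (Cs : C (Defs.sigma T tau)).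
    { split; [apply sigma_in_T; auto|]. split; [apply sigma_le_next; auto|].
      intros r Tr Hr. destruct (Rle_dec r tau); [apply Hupto; auto|].
      assert (Defs.sigma T tau <= r) by (apply sigma_le_next; auto; lra).
      replace r with (Defs.sigma T tau) by lra. apply Hscat; auto. }
    pose proof (Hub _ Cs). lra.
  - (* right-dense: some point of T slightly after tau belongs to C *)
    destruct (Hdense tau Ttau Hupto (eq_sym Hrd)) as [del [Hdel Hright]].
    destruct (sigma_approx tau (Rmin del (t1 - tau)) Ttau) as [y [Ty [y1 y2]]].
    { apply Rmin_pos; lra. }
    rewrite <- Hrd in y2.
    pose proof (Rmin_l del (t1 - tau)). pose proof (Rmin_r del (t1 - tau)).
    assert (Cy : C y).
    { split; auto. split; [lra|]. intros r Tr Hr.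
      destruct (Rle_dec r tau); [apply Hupto; auto | apply Hright; auto; lra]. }
    pose proof (Hub _ Cy). lra.
Qed.

Lemma nonneg_right_of_right_dense w c eps t d : 0 <= c -> 0 < eps ->
  Defs.sigma T t = t -> delta_deriv T w t d -> 0 <= w t -> - c * w t + eps <= d ->
  exists del, 0 < del /\ forall s, T s -> t < s -> s < t + del -> 0 <= w s.
Proof.
  intros Hc Heps Hrd Hd Hwt Hdt.
  destruct (Hd (eps / 2)) as [dl [Hdl K]]; [lra|].
  assert (Hinv : 0 < 1 / (c + 1)) by (apply Rdiv_lt_0_compat; lra).
  exists (Rmin dl (1 / (c + 1))). split; [apply Rmin_pos; auto|].
  intros s Ts ts Hs.
  pose proof (Rmin_l dl (1 / (c + 1))). pose proof (Rmin_r dl (1 / (c + 1))).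
  specialize (K s Ts ltac:(rewrite Rabs_left; lra)).
  rewrite Hrd, (Rabs_left (t - s)) in K by lra.
  apply Rabs_le_between in K.
  assert (Hcs : c * (s - t) <= 1).
  { apply Rle_trans with (c * (1 / (c + 1))); [apply Rmult_le_compat_l; lra|].
    replace (c * (1 / (c + 1))) with (1 - 1 / (c + 1)) by (field; lra). lra. }
  assert (0 <= w t * (1 - c * (s - t))) by (apply Rmult_le_pos; lra).
  nra.
Qed.

Lemma strict_comparison w c eps T0 : 0 <= c -> 0 < eps ->
  (forall t, T t -> t <= T0 -> 0 <= 1 - c * (Defs.sigma T t - t)) ->
  (forall t, T t -> exists d, delta_deriv T w t d /\ (t <= T0 -> - c * w t + eps <= d)) ->
  0 <= w 0 -> forall t, T t -> t <= T0 -> 0 <= w t.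
Proof.
  intros Hc Heps Hmu Hd Hw0.
  apply (time_scale_induction (fun t => t <= T0 -> 0 <= w t)).
  - auto.
  - intros t Tt Hupto Hrs Hs.
    assert (Ht : t <= T0) by lra.
    specialize (Hupto t Tt (Rle_refl _) Ht).
    destruct (Hd t Tt) as [d [Dd Hdd]]. specialize (Hdd Ht).
    rewrite (delta_deriv_jump w t d Tt Dd).
    specialize (Hmu t Tt Ht). nra.
  - intros t Tt Hupto Hrd.
    destruct (Rle_dec T0 t) as [HT0|HT0].
    + exists 1. split; [lra|]. intros s _ ts _ Hs. lra.
    + assert (Ht : t <= T0) by lra.
      destruct (Hd t Tt) as [d [Dd Hdd]].
      destruct (nonneg_right_of_right_dense w c eps t d Hc Heps Hrd Dd
                  (Hupto t Tt (Rle_refl _) Ht) (Hdd Ht)) as [del [Hdel Hr]].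
      exists del. split; [assumption|]. intros s Ts ts Hs _. apply Hr; auto.
  - intros t Tt Hbefore Hleft Ht.
    destruct (Hd t Tt) as [d [Dd _]].
    apply (nonneg_at_left_dense w t d Tt Dd Hleft).
    intros r Tr Hr. apply Hbefore; auto. lra.
Qed.

(* Comparison principle: if g^Delta >= -c g on [0,T0], 1 - c mu >= 0 there
   and g(0) >= 0, then g >= 0 on [0,T0].  Apply the strict version to
   g(x) + eps x and let eps tend to 0. *)
Lemma comparison g c T0 : 0 <= c ->
  (forall t, T t -> t <= T0 -> 0 <= 1 - c * (Defs.sigma T t - t)) ->
  (forall t, T t -> exists d, delta_deriv T g t d /\ (t <= T0 -> - c * g t <= d)) ->
  0 <= g 0 -> forall t, T t -> t <= T0 -> 0 <= g t.
Proof.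
  intros Hc Hmu Hd Hg0.
  assert (Hpert : forall eps, 0 < eps ->
            forall t, T t -> t <= T0 -> 0 <= 1 * g t + eps * t).
  { intros eps Heps.
    apply (strict_comparison (fun x => 1 * g x + eps * x) c eps T0 Hc Heps Hmu);
      [|lra].
    intros t Tt. destruct (Hd t Tt) as [d [Dd Hdd]].
    exists (1 * d + eps * 1).
    split; [apply delta_deriv_lincomb; auto; apply delta_deriv_id|].
    intros Ht. specialize (Hdd Ht). pose proof (ts_min T HT t Tt).
    assert (0 <= c * (eps * t)) by (apply Rmult_le_pos; [|apply Rmult_le_pos]; lra).
    lra. }
  intros t Tt Ht. pose proof (ts_min T HT t Tt).
  apply Rnot_lt_le. intro Hneg.
  set (eps := - g t / (2 * (t + 1))).
  assert (Heps : 0 < eps) by (apply Rdiv_lt_0_compat; lra).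
  assert (Eeps : eps * (t + 1) = - g t / 2) by (unfold eps; field; lra).
  pose proof (Hpert eps Heps t Tt Ht). nra.
Qed.

Lemma comparison_global g c : 0 <= c ->
  (forall t, T t -> 0 <= 1 - c * (Defs.sigma T t - t)) ->
  (forall t, T t -> exists d, delta_deriv T g t d /\ - c * g t <= d) ->
  0 <= g 0 -> forall t, T t -> 0 <= g t.
Proof.
  intros Hc Hmu Hd Hg0 t Tt.
  apply (comparison g c t Hc); auto with real.
  intros r Tr. destruct (Hd r Tr) as [d [Dd Hdd]]. exists d. auto.
Qed.

Lemma nonneg_of_nonneg_delta_deriv g :
  (forall t, T t -> exists d, delta_deriv T g t d /\ 0 <= d) ->
  0 <= g 0 -> forall t, T t -> 0 <= g t.
Proof.
  intros Hd. apply (comparison_global g 0); [lra | intros; lra |].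
  intros t Tt. destruct (Hd t Tt) as [d [Dd Hdd]]. exists d. split; auto. lra.
Qed.

Lemma delta_deriv_right_dense f t l : Defs.sigma T t = t ->
  derivable_pt_lim f t l -> delta_deriv T f t l.
Proof.
  intros Hrd Hl e He. destruct (Hl e He) as [dl Hdl]. exists dl.
  split; [apply cond_pos|]. intros s Ts Hs. rewrite Hrd.
  destruct (Req_dec s t) as [-> | Hst].
  - replace (f t - f t - l * (t - t)) with 0 by ring. rewrite Rabs_R0.
    apply Rmult_le_pos; [lra | apply Rabs_pos].
  - rewrite Rabs_minus_sym in Hs.
    specialize (Hdl (s - t) ltac:(lra) Hs). replace (t + (s - t)) with s in Hdl by ring.
    replace (f t - f s - l * (t - s)) with (((f s - f t) / (s - t) - l) * (t - s))
      by (field; lra).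
    rewrite Rabs_mult. apply Rmult_le_compat_r; [apply Rabs_pos | lra].
Qed.

Lemma delta_deriv_right_scattered f t : T t -> t < Defs.sigma T t ->
  continuity_pt f t ->
  delta_deriv T f t ((f (Defs.sigma T t) - f t) / (Defs.sigma T t - t)).
Proof.
  intros Tt Hrs Hcont e He.
  set (mu := Defs.sigma T t - t). set (d := (f (Defs.sigma T t) - f t) / mu).
  assert (Hmu : 0 < mu) by (unfold mu; lra).
  assert (Ed : f (Defs.sigma T t) = f t + d * mu) by (unfold d; field; lra).
  pose proof (Rabs_pos d).
  assert (Hemu : 0 < e * mu / 2) by (apply Rdiv_lt_0_compat; [nra | lra]).
  destruct (Hcont (e * mu / 2) Hemu) as [alp [Halp Hf]].
  set (b := e * mu / (2 * (Rabs d + 1))).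
  assert (Hb : 0 < b) by (apply Rdiv_lt_0_compat; [nra | lra]).
  exists (Rmin alp (Rmin mu b)). split; [apply Rmin_pos; [lra | apply Rmin_pos; lra]|].
  intros s Ts Hs.
  pose proof (Rmin_l alp (Rmin mu b)). pose proof (Rmin_r alp (Rmin mu b)).
  pose proof (Rmin_l mu b). pose proof (Rmin_r mu b).
  assert (Hst : s <= t).
  { apply Rnot_lt_le. intro Hts. pose proof (sigma_le_next t s Tt Ts Hts).
    rewrite Rabs_left in Hs by lra. unfold mu in *. lra. }
  rewrite Ed, (Rabs_right (Defs.sigma T t - s)) by lra.
  replace (f t + d * mu - f s - d * (Defs.sigma T t - s))
    with ((f t - f s) + d * (s - t)) by (unfold mu; ring).
  assert (Hfs : Rabs (f t - f s) <= e * mu / 2).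
  { destruct (Req_dec s t) as [-> | Hne].
    - rewrite Rminus_diag, Rabs_R0. lra.
    - rewrite Rabs_minus_sym. left. apply Hf. split.
      + split; [exact I | intros E; apply Hne; auto].
      + simpl. unfold Rdist. rewrite Rabs_minus_sym. lra. }
  assert (Hds : Rabs (d * (s - t)) <= e * mu / 2).
  { rewrite Rabs_mult, Rabs_minus_sym.
    apply Rle_trans with (Rabs d * b); [apply Rmult_le_compat_l; lra|].
    unfold b. replace (Rabs d * (e * mu / (2 * (Rabs d + 1))))
      with (e * mu / 2 - b) by (unfold b; field; lra). lra. }
  eapply Rle_trans; [apply Rabs_triang|].
  assert (e * mu <= e * (Defs.sigma T t - s)) by (apply Rmult_le_compat_l; unfold mu; lra).
  lra.
Qed.

Lemma pow_diff_ge n t s : 0 <= t -> t <= s ->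
  INR (S n) * t ^ n * (s - t) <= s ^ S n - t ^ S n.
Proof.
  intros H1 H2. induction n.
  - simpl. lra.
  - rewrite S_INR.
    replace (s ^ S (S n) - t ^ S (S n)) with (s * (s ^ S n - t ^ S n) + t ^ S n * (s - t))
      by (simpl; ring).
    assert (0 <= t ^ n) by (apply pow_le; auto).
    assert (INR (S n) * t ^ n * (s - t) * t <= INR (S n) * t ^ n * (s - t) * s).
    { apply Rmult_le_compat_l; auto.
      apply Rmult_le_pos; [apply Rmult_le_pos; [apply pos_INR | auto] | lra]. }
    assert (s * (INR (S n) * t ^ n * (s - t)) <= s * (s ^ S n - t ^ S n))
      by (apply Rmult_le_compat_l; lra).
    simpl in *. nra.
Qed.

Lemma delta_deriv_pow n t : T t ->
  exists d, delta_deriv T (fun x => x ^ S n) t d /\ INR (S n) * t ^ n <= d.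
Proof.
  intros Tt. pose proof (derivable_pt_lim_pow t (S n)) as Hl. simpl Nat.pred in Hl.
  pose proof (ts_min T HT t Tt) as Ht0.
  destruct (Rle_lt_or_eq_dec t (Defs.sigma T t) (sigma_ge t Tt)) as [Hrs|Hrd].
  - eexists. split.
    + apply (delta_deriv_right_scattered _ _ Tt Hrs).
      apply derivable_continuous_pt. exact (exist _ _ Hl).
    + pose proof (pow_diff_ge n t (Defs.sigma T t) Ht0 (Rlt_le _ _ Hrs)).
      apply (Rmult_le_reg_r (Defs.sigma T t - t)); [lra|].
      replace ((Defs.sigma T t ^ S n - t ^ S n) / (Defs.sigma T t - t) * (Defs.sigma T t - t))
        with (Defs.sigma T t ^ S n - t ^ S n) by (field; lra). auto.
  - exists (INR (S n) * t ^ n). split; [|lra].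
    apply delta_deriv_right_dense; auto.
Qed.

(* The majorants B (c x)^n / n! used to show that the modes m < 0 vanish. *)
Definition envelope (B c : R) (n : nat) (x : R) : R := B * ((c * x) ^ n / INR (fact n)).

Lemma envelope_nonneg B c n x : 0 <= B -> 0 <= c -> 0 <= x -> 0 <= envelope B c n x.
Proof.
  intros HB Hc Hx. unfold envelope. apply Rmult_le_pos; [auto|].
  apply Rmult_le_pos; [apply pow_le; nra|].
  left. apply Rinv_0_lt_compat, lt_0_INR, lt_O_fact.
Qed.

Lemma envelope_delta_deriv B c n t : 0 <= B -> 0 <= c -> T t ->
  exists d, delta_deriv T (envelope B c (S n)) t d /\ c * envelope B c n t <= d.
Proof.
  intros HB Hc Tt.
  destruct (delta_deriv_pow n t Tt) as [d [Dd Hd]].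
  set (K := B * c ^ S n / INR (fact (S n))).
  assert (HK : 0 <= K).
  { unfold K. apply Rmult_le_pos; [apply Rmult_le_pos; [auto | apply pow_le; auto]|].
    left. apply Rinv_0_lt_compat, lt_0_INR, lt_O_fact. }
  exists (K * d + 0 * 0). split.
  - apply (delta_deriv_ext (fun x => K * x ^ S n + 0 * 0)).
    + intros x. unfold envelope, K. rewrite Rpow_mult_distr. field. apply INR_fact_neq_0.
    + apply delta_deriv_lincomb; [exact Dd | apply delta_deriv_const].
  - replace (c * envelope B c n t) with (K * (INR (S n) * t ^ n)).
    + rewrite Rmult_0_r, Rplus_0_r. apply Rmult_le_compat_l; auto.
    + unfold envelope, K. rewrite Rpow_mult_distr, fact_simpl, mult_INR. simpl pow.
      field. split; [apply INR_fact_neq_0 | apply not_0_INR; lia].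
Qed.

(* The upwind scheme u_m^Delta = -c (u_m - u_(m-1)) with rate c = k / mu_x,
   under the stability condition 1 - c mu >= 0 (a consequence of (TS1)). *)
Section UpwindScheme.
Variables (A c : R) (u : Z -> R -> R).
Hypothesis HA : 0 <= A.
Hypothesis Hc : 0 < c.
Hypothesis Hstab : forall t, T t -> 0 <= 1 - c * (Defs.sigma T t - t).
Hypothesis Hderiv :
  forall m t, T t -> delta_deriv T (u m) t (- c * (u m t - u (m - 1)%Z t)).
Hypothesis Hinit0 : u 0%Z 0 = A.
Hypothesis Hinit : forall m, m <> 0%Z -> u m 0 = 0.
Hypothesis Hbounded :
  forall T0, 0 < T0 -> exists B, forall m t, T t -> t <= T0 -> Rabs (u m t) <= B.

(* If |u| <= B on [0,t0], then every mode m < 0 is bounded there by the n-th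
   envelope, by induction on n: compare envelope_(n+1) -+ u_m, whose delta
   derivative is controlled by envelope_n >= |u_(m-1)|. *)
Lemma negative_modes_envelope t0 B : 0 <= B ->
  (forall m s, T s -> s <= t0 -> Rabs (u m s) <= B) ->
  forall n m s, (m < 0)%Z -> T s -> s <= t0 -> Rabs (u m s) <= envelope B c n s.
Proof.
  intros HB0 HB.
  induction n; intros m s Hm Ts Hs.
  - unfold envelope. simpl. replace (B * (1 / 1)) with B by field. auto.
  - assert (Hside : forall sg, sg = 1 \/ sg = -1 -> 0 <= envelope B c (S n) s - sg * u m s).
    { intros sg Hsg.
      apply (comparison (fun x => envelope B c (S n) x - sg * u m x) c t0); auto; [lra | | ].
      - intros r Tr.
        destruct (envelope_delta_deriv B c n r HB0 (Rlt_le _ _ Hc) Tr) as [d [Dd Hd]].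
        eexists. split.
        + apply (delta_deriv_ext (fun x => 1 * envelope B c (S n) x + (- sg) * u m x));
            [intros x; ring|].
          apply delta_deriv_lincomb; [exact Dd | apply Hderiv; auto].
        + intros Hr. pose proof (ts_min T HT r Tr).
          pose proof (envelope_nonneg B c (S n) r HB0 (Rlt_le _ _ Hc) ltac:(lra)).
          pose proof (Rabs_le_between _ _ (IHn (m - 1)%Z r ltac:(lia) Tr Hr)).
          assert (c * envelope B c n r <= d) by auto.
          destruct Hsg; subst sg; nra.
      - unfold envelope. rewrite (Hinit m), Rmult_0_r, pow_i by lia.
        unfold Rdiv. lra. }
    pose proof (Hside 1 (or_introl eq_refl)). pose proof (Hside (-1) (or_intror eq_refl)).
    apply Rabs_le. lra.
Qed.

(* The modes m < 0 vanish identically: they are squeezed by envelopes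
   B (c t)^n / n!, which tend to 0 as n grows. *)
Lemma negative_modes_vanish t : T t -> forall m, (m < 0)%Z -> u m t = 0.
Proof.
  intros Tt m Hm. pose proof (ts_min T HT t Tt).
  destruct (Hbounded (t + 1)) as [B HB]; [lra|].
  assert (HB0 : 0 <= B).
  { apply Rle_trans with (Rabs (u 0%Z 0)); [apply Rabs_pos|].
    apply HB; [apply (ts_zero T HT) | lra]. }
  apply (eq_0_of_le_pow_fact _ B (c * t)). intros n.
  apply (negative_modes_envelope (t + 1) B HB0 HB n m t Hm Tt). lra.
Qed.

(* The modes m >= 0 stay nonnegative: u_n^Delta >= -c u_n since u_(n-1) >= 0. *)
Lemma nonneg_modes_nonneg n s : T s -> 0 <= u (Z.of_nat n) s.
Proof.
  revert s. induction n as [|n IHn]; intros s Ts;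
    apply (comparison_global (u _) c (Rlt_le _ _ Hc) Hstab); auto.
  - intros r Tr. eexists. split; [apply Hderiv; auto|].
    rewrite (negative_modes_vanish r Tr (Z.of_nat 0 - 1)) by lia. lra.
  - simpl. lra.
  - intros r Tr. eexists. split; [apply Hderiv; auto|].
    replace (Z.of_nat (S n) - 1)%Z with (Z.of_nat n) by lia.
    pose proof (IHn r Tr). nra.
  - rewrite Hinit by lia. lra.
Qed.

Definition partial_sum (N : nat) (x : R) : R := sum_f_R0 (fun j => u (Z.of_nat j) x) N.

(* The fluxes telescope: P_N^Delta = -c u_N, because u_(-1) = 0. *)
Lemma partial_sum_delta_deriv N s : T s -> delta_deriv T (partial_sum N) s (- c * u (Z.of_nat N) s).
Proof.
  revert s. induction N as [|N IHN]; intros s Ts.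
  - replace (- c * u (Z.of_nat 0) s) with (- c * (u (Z.of_nat 0) s - u (Z.of_nat 0 - 1)%Z s))
      by (rewrite (negative_modes_vanish s Ts (Z.of_nat 0 - 1)) by lia; ring).
    apply Hderiv; auto.
  - apply (delta_deriv_ext (fun x => 1 * partial_sum N x + 1 * u (Z.of_nat (S N)) x));
      [intros x; unfold partial_sum; simpl; ring|].
    replace (- c * u (Z.of_nat (S N)) s)
      with (1 * (- c * u (Z.of_nat N) s)
            + 1 * (- c * (u (Z.of_nat (S N)) s - u (Z.of_nat (S N) - 1)%Z s)))
      by (replace (Z.of_nat (S N) - 1)%Z with (Z.of_nat N) by lia; ring).
    apply delta_deriv_lincomb; [apply IHN | apply Hderiv]; auto.
Qed.

Lemma partial_sum_init N : partial_sum N 0 = A.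
Proof.
  induction N as [|N IHN]; unfold partial_sum in *; simpl; [auto|].
  rewrite IHN, Hinit by lia. ring.
Qed.

Lemma defect_delta_deriv N s : T s ->
  delta_deriv T (fun x => A - partial_sum N x) s (c * u (Z.of_nat N) s).
Proof.
  intros Ts.
  apply (delta_deriv_ext (fun x => 1 * (fun _ => A) x + (-1) * partial_sum N x));
    [intros x; simpl; ring|].
  replace (c * u (Z.of_nat N) s) with (1 * 0 + (-1) * (- c * u (Z.of_nat N) s)) by ring.
  apply delta_deriv_lincomb; [apply delta_deriv_const | apply partial_sum_delta_deriv; auto].
Qed.

Lemma partial_sum_le N s : T s -> partial_sum N s <= A.
Proof.
  intros Ts. enough (0 <= A - partial_sum N s) by lra.
  apply (nonneg_of_nonneg_delta_deriv (fun x => A - partial_sum N x)); auto.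
  - intros r Tr. eexists. split; [apply defect_delta_deriv; auto|].
    pose proof (nonneg_modes_nonneg N r Tr). nra.
  - rewrite partial_sum_init. lra.
Qed.

Definition defect_sum (M : nat) (x : R) : R := sum_f_R0 (fun N => A - partial_sum N x) M.

Lemma defect_sum_delta_deriv M s : T s -> delta_deriv T (defect_sum M) s (c * partial_sum M s).
Proof.
  revert s. induction M as [|M IHM]; intros s Ts.
  - apply defect_delta_deriv; auto.
  - apply (delta_deriv_ext (fun x => 1 * defect_sum M x + 1 * (A - partial_sum (S M) x)));
      [intros x; unfold defect_sum; simpl; ring|].
    replace (c * partial_sum (S M) s)
      with (1 * (c * partial_sum M s) + 1 * (c * u (Z.of_nat (S M)) s))
      by (unfold partial_sum; simpl; ring).
    apply delta_deriv_lincomb; [apply IHM | apply defect_delta_deriv]; auto.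
Qed.

(* Since P_M <= A, D_M grows at most linearly: D_M(s) <= c A s. *)
Lemma defect_sum_le M s : T s -> defect_sum M s <= c * A * s.
Proof.
  intros Ts. enough (0 <= (c * A) * s + (-1) * defect_sum M s) by lra.
  apply (nonneg_of_nonneg_delta_deriv (fun x => (c * A) * x + (-1) * defect_sum M x)); auto.
  - intros r Tr. exists ((c * A) * 1 + (-1) * (c * partial_sum M r)). split.
    + apply delta_deriv_lincomb; [apply delta_deriv_id | apply defect_sum_delta_deriv; auto].
    + pose proof (partial_sum_le M r Tr). nra.
  - assert (Hzero : defect_sum M 0 = 0).
    { unfold defect_sum. induction M as [|M IHM]; simpl; rewrite ?IHM, partial_sum_init; ring. }
    rewrite Hzero. lra.
Qed.

(* The defects decrease in N, so D_M >= (M+1) (A - P_M). *)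
Lemma defect_sum_ge M s : T s -> INR (S M) * (A - partial_sum M s) <= defect_sum M s.
Proof.
  intros Ts. induction M as [|M IHM].
  - unfold defect_sum. simpl. lra.
  - replace (defect_sum (S M) s) with (defect_sum M s + (A - partial_sum (S M) s))
      by (unfold defect_sum; simpl; ring).
    replace (partial_sum (S M) s) with (partial_sum M s + u (Z.of_nat (S M)) s)
      by (unfold partial_sum; simpl; ring).
    pose proof (nonneg_modes_nonneg (S M) s Ts). pose proof (pos_INR (S M)).
    rewrite S_INR. nra.
Qed.

(* Conservation of mass: the partial sums converge to A, with tail
   A - P_M(t) <= c A t / (M + 1). *)
Lemma partial_sums_converge t : T t -> infinite_sum (fun n => u (Z.of_nat n) t) A.
Proof.
  intros Tt. apply (infinite_sum_of_tail_bound _ A (c * A * t)). intros M.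
  fold (partial_sum M t).
  pose proof (partial_sum_le M t Tt). split; [lra|].
  assert (HM : 0 < INR (S M)) by (apply lt_0_INR; lia).
  apply (Rmult_le_reg_l (INR (S M))); [assumption|].
  replace (INR (S M) * (c * A * t / INR (S M))) with (c * A * t) by (field; lra).
  pose proof (defect_sum_ge M t Tt). pose proof (defect_sum_le M t Tt). lra.
Qed.
End UpwindScheme.
End TimeScale.

Theorem mainTheorem11 (T : R -> Prop) (A k mux : R) (u : Z -> R -> R) :
  time_scale T -> 0 < A -> 0 < k -> 0 < mux ->
  (* (TS1) *)
  (forall t, T t -> 1 - k * graininess T t / mux > 0) ->
  is_solution_P T A k mux u ->
  forall t, T t ->
    (exists S, infinite_sum (fun n : nat => u (Z.of_nat n) t) S /\ mux * S = A * mux) /\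
    (forall m : Z, (m < 0)%Z -> u m t = 0).
Proof.
  intros HT HA Hk Hmux TS1 [Hsol [Hinit0 [Hinit Hbounded]]] t Tt.
  set (c := k / mux).
  assert (Hc : 0 < c) by (apply Rdiv_lt_0_compat; auto).
  assert (Hstab : forall s, T s -> 0 <= 1 - c * (Defs.sigma T s - s)).
  { intros s Ts. specialize (TS1 s Ts). unfold graininess in TS1.
    replace (c * (Defs.sigma T s - s)) with (k * (Defs.sigma T s - s) / mux)
      by (unfold c; field; lra). lra. }
  assert (Hderiv : forall m s, T s -> delta_deriv T (u m) s (- c * (u m s - u (m - 1)%Z s))).
  { intros m s Ts. destruct (Hsol m s Ts) as [d [Dd Ed]].
    assert (k * ((u m s - u (m - 1)%Z s) / mux) = c * (u m s - u (m - 1)%Z s))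
      by (unfold c; field; lra).
    replace (- c * (u m s - u (m - 1)%Z s)) with d by lra. exact Dd. }
  split.
  - exists A. split; [|ring].
    apply (partial_sums_converge T HT A c u); auto; lra.
  - apply (negative_modes_vanish T HT c u); auto.
Qed.
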